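(* Let $\Pi\subset\mathbb R^2$ be a convex polygon with vertex set $V=\{\mathbf v_1,\dots,\mathbf v_n\}$ ($n\ge3$, counterclockwise, all extreme points), and let $\delta$ be a chordal decomposition of $\Pi$. Define $\kappa\colon\Pi\times V\to\mathbb R$ by $$\langle a|v\rangle_\kappa=\frac1{2n}\sum_{g\in D_n}\langle a|v\rangle_{\delta g}.$$ Then $\kappa$ is a coordinate system on $\Pi$: for every $a\in\Pi$ the values $\langle a|v\rangle_\kappa$ lie in $[0,1]$ and $a=\sum_{v\in V}\langle a|v\rangle_\kappa\,v$ is a convex combination.
   Context: A chord is a segment joining two non-adjacent vertices of $\Pi$. A chordal decomposition $\delta$ is a set of $n-3$ pairwise non-crossing chords; they decompose $\Pi$ into $n-2$ closed triangles with vertices among $V$, forming the set $T_\delta$. For a triangle $\tau$ with counterclockwise vertices $u_0,u_1,u_2$ (indices mod 3), $\langle x|u_i\rangle_\tau=A(u_{i-1},x,u_{i+1})/A(u_0,u_1,u_2)$, with $A(\mathbf p,\mathbf q,\mathbf r)=\tfrac12\det[\mathbf q-\mathbf p,\mathbf r-\mathbf p]$. Chordal coordinates: for a vertex $v$, let $\tau_1,\dots,\tau_r$ enumerate the triangles of $T_\delta$ containing $v$; $F_0=0$, $F_k=F_{k-1}+\mathds 1_{\tau_k}\langle\cdot|v\rangle_{\tau_k}-\mathds 1_{\tau_k\cap(\tau_1\cup\dots\cup\tau_{k-1})}\langle\cdot|v\rangle_{\tau_k}$, and $\langle a|v\rangle_\delta=F_r(a)$ ($\mathds 1_X$ the indicator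 of $X$). The dihedral group $D_n$ of order $2n$ is the automorphism group of the cycle graph on $\{1,\dots,n\}$ (generated by $i\mapsto i+1$ and $i\mapsto -i$ modulo $n$); it acts on chords by $\{\mathbf v_i,\mathbf v_j\}\mapsto\{\mathbf v_{ig},\mathbf v_{jg}\}$ (the vertex positions being fixed), and $\delta g$ denotes the image chordal decomposition. *)

From HB Require Import structures.
From mathcomp Require Import all_boot all_order all_algebra all_fingroup.
Set Implicit Arguments. Unset Strict Implicit. Unset Printing Implicit Defensive.
Import Order.TTheory GRing.Theory Num.Theory.
Local Open Scope ring_scope.

Section Chordal.
Variable R : realFieldType.
Variable n : nat.
(* vertex positions v_1..v_n, indexed by 'I_n in counterclockwise order *)
Variable V : 'I_n -> 'rV[R]_2.

Definition area (p q r : 'rV[R]_2) : R := \det (col_mx (q - p) (r - p)) / 2.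

Definition in_polygon (a : 'rV[R]_2) : Prop :=
  exists w : 'I_n -> R, (forall i, 0 <= w i) /\ \sum_i w i = 1 /\
    a = \sum_i w i *: V i.

(* counterclockwise, all vertices extreme points *)
Definition ccw_strictly_convex : Prop :=
  forall i j k : 'I_n, (i < j < k)%N -> 0 < area (V i) (V j) (V k).

Definition adj (i j : 'I_n) : bool :=
  ((i.+1 %% n)%N == j) || ((j.+1 %% n)%N == i).

Definition is_chord (c : {set 'I_n}) : bool :=
  [exists i, exists j, (c == [set i; j]) && (i != j) && ~~ adj i j].

Definition crossing (c d : {set 'I_n}) : bool :=
  [exists i, exists j, exists k, exists l,
     [&& c == [set i; j], d == [set k; l] & (i < k < j)%N && (j < l)%N]].

Definition chordal_decomposition (delta : {set {set 'I_n}}) : Prop :=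
  [/\ forall c, c \in delta -> is_chord c,
      #|delta| = (n - 3)%N &
      forall c d, c \in delta -> d \in delta -> ~~ crossing c d].

(* triangles, as index triples (i,j,k) with i<j<k, i.e. counterclockwise *)
Definition tri := ('I_n * 'I_n * 'I_n)%type.

Definition side (delta : {set {set 'I_n}}) (x y : 'I_n) : bool :=
  adj x y || ([set x; y] \in delta).

Definition is_triangle (delta : {set {set 'I_n}}) (t : tri) : bool :=
  let: (i, j, k) := t in
  [&& (i < j < k)%N, side delta i j, side delta j k & side delta i k].

Definition triangles (delta : {set {set 'I_n}}) : seq tri :=
  [seq t <- enum {: tri} | is_triangle delta t].

Definition tri_has (t : tri) (v : 'I_n) : bool :=
  let: (i, j, k) := t in [|| v == i, v == j | v == k].

(* barycentric coordinate <x|v>_t, with counterclockwise vertices u0,u1,u2 = v_i,v_j,v_k *)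
Definition bary (t : tri) (v : 'I_n) (x : 'rV[R]_2) : R :=
  let: (i, j, k) := t in
  let D := area (V i) (V j) (V k) in
  if v == i then area (V k) x (V j) / D
  else if v == j then area (V i) x (V k) / D
  else if v == k then area (V j) x (V i) / D
  else 0.

Definition in_tri (t : tri) (x : 'rV[R]_2) : bool :=
  let: (i, j, k) := t in
  [&& 0 <= bary t i x, 0 <= bary t j x & 0 <= bary t k x].

(* F_k = F_{k-1} + 1_{tau_k} <.|v>_{tau_k} - 1_{tau_k cap (tau_1 cup ... cup tau_{k-1})} <.|v>_{tau_k};
   Fsum prev s a v computes the increments contributed by the remaining triangles s,
   where prev = [tau_1; ...; tau_{k-1}] are those already processed. *)
Fixpoint Fsum (prev s : seq tri) (v : 'I_n) (a : 'rV[R]_2) : R :=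
  match s with
  | [::] => 0
  | t :: s' =>
      ((if in_tri t a then bary t v a else 0)
       - (if in_tri t a && has (fun t' => in_tri t' a) prev
          then bary t v a else 0))
      + Fsum (rcons prev t) s' v a
  end.

(* chordal coordinate <a|v>_delta = F_r(a), with tau_1..tau_r the triangles of
   T_delta containing v, in the canonical enumeration order *)
Definition chordal_coord (delta : {set {set 'I_n}}) (a : 'rV[R]_2) (v : 'I_n) : R :=
  Fsum [::] [seq t <- triangles delta | tri_has t v] v a.

(* the dihedral group D_n: automorphisms of the cycle graph on 'I_n *)
Definition dihedral : {set {perm 'I_n}} :=
  [set g : {perm 'I_n} | [forall i, forall j, adj i j == adj (g i) (g j)]].

Definition act_decomp (delta : {set {set 'I_n}}) (g : {perm 'I_n}) : {set {set 'I_n}} :=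
  [set [set g x | x in c] | c : {set 'I_n} in delta].

Definition kappa (delta : {set {set 'I_n}}) (a : 'rV[R]_2) (v : 'I_n) : R :=
  (2 * n)%:R^-1 * \sum_(g in dihedral) chordal_coord (act_decomp delta g) a v.
End Chordal.

From HB Require Import structures.
From mathcomp Require Import all_boot all_order all_algebra all_fingroup.
From mathcomp Require Import zify ring.
Set Implicit Arguments. Unset Strict Implicit. Unset Printing Implicit Defensive.
Import Order.TTheory GRing.Theory Num.Theory.
Local Open Scope ring_scope.

(* The triangles of
   T_delta cover the polygon: descending from the edge v_n v_1 through the apex triangles
   of the sides of delta (which exist because delta has the maximal number n - 3 of
   non-crossing chords) reaches a triangle containing a.  Two triangles of T_delta
   containing a induce the same barycentric coordinates on it: a side of one of them is
   a line with one triangle weakly on each side, so a lies on that line and its weights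
   in the second triangle live on vertices of the first.  Hence the recursion F_k
   telescopes to the barycentric coordinates of a in any triangle of T_delta containing
   it, which form a convex combination.  Dihedral symmetries preserve adjacency and
   crossing of chords, so every delta g is again a chordal decomposition, and kappa is
   the mean of the 2n = |D_n| convex combinations <a|.>_(delta g). *)

Lemma ord_eqE n (i j : 'I_n) : (i == j) = (i == j :> nat).
Proof. by []. Qed.

Lemma det_col_mx2 (R : comNzRingType) (u v : 'rV[R]_2) :
  \det (col_mx u v) = u 0 0 * v 0 1 - u 0 1 * v 0 0.
Proof.
have up : (0 : 'I_(1 + 1)) = lshift 1 0 by apply/val_inj.
have dn : lift (0 : 'I_(1 + 1)) 0 = rshift 1 0 by apply/val_inj.
rewrite (expand_det_row _ 0) !big_ord_recl big_ord0 /cofactor /= !det_mx11 !mxE.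
rewrite dn up !(unsplitK (inl _ _)) !(unsplitK (inr _ _)) -up -[ord0]/(0 : 'I_2).
have -> : rshift 1 0 = 1 :> 'I_2 by apply/val_inj.
have -> : lift 1 0 = 0 :> 'I_2 by apply/val_inj.
ring.
Qed.

Section SignedArea.
Variable R : realFieldType.
Implicit Types p q r x y : 'rV[R]_2.

Lemma areaE p q r : area p q r =
  ((q 0 0 - p 0 0) * (r 0 1 - p 0 1) - (q 0 1 - p 0 1) * (r 0 0 - p 0 0)) / 2.
Proof. by rewrite /area det_col_mx2 !mxE. Qed.

Lemma row2P x y : x 0 0 = y 0 0 -> x 0 1 = y 0 1 -> x = y.
Proof.
move=> e0 e1; apply/rowP => i.
by have [->|->] : i = 0 \/ i = 1 by case: i => [[|[|]]] // ?; [left|right]; apply/val_inj.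
Qed.

Lemma area_cycle p q r : area p q r = area q r p.
Proof. by rewrite !areaE; field. Qed.

Lemma area_swap p q r : area q p r = - area p q r.
Proof. by rewrite !areaE; field. Qed.

Lemma area_same12 p r : area p p r = 0.
Proof. by rewrite areaE; field. Qed.

Lemma area_same23 p q : area p q q = 0.
Proof. by rewrite areaE; field. Qed.

Lemma area_same13 p q : area p q p = 0.
Proof. by rewrite areaE; field. Qed.

Lemma area_affine (I : finType) (w : I -> R) (X : I -> 'rV[R]_2) p q :
  \sum_i w i = 1 -> area p q (\sum_i w i *: X i) = \sum_i w i * area p q (X i).
Proof.
move=> w1; have coordE j : (\sum_i w i *: X i) 0 j = \sum_i w i * X i 0 j.
  by rewrite summxE; apply: eq_bigr => i _; rewrite mxE.
rewrite areaE !coordE.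
set a0 := q 0 0 - p 0 0; set a1 := q 0 1 - p 0 1.
under [RHS]eq_bigr => i _ do rewrite areaE -/a0 -/a1.
rewrite [RHS](eq_bigr (fun i => a0 / 2 * (w i * X i 0 1) - a1 / 2 * (w i * X i 0 0)
                                + (a1 * p 0 0 - a0 * p 0 1) / 2 * w i)); last first.
  by move=> i _; rewrite /a0 /a1; field.
by rewrite !big_split /= sumrN -!mulr_sumr w1; field.
Qed.

Lemma area_affine2 (I : finType) (w : I -> R) (X : I -> 'rV[R]_2) p q :
  \sum_i w i = 1 -> area p (\sum_i w i *: X i) q = \sum_i w i * area p (X i) q.
Proof.
move=> w1; rewrite -area_cycle area_affine //.
by apply: eq_bigr => i _; rewrite area_cycle.
Qed.

Lemma area_split p q r x : area r x q + area p x r + area q x p = area p q r.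
Proof. by rewrite !areaE; field. Qed.

Lemma area_decomp p q r x :
  area r x q *: p + area p x r *: q + area q x p *: r = area p q r *: x.
Proof. by apply: row2P; rewrite !mxE !areaE; field. Qed.

End SignedArea.

Section ConvexCoords.
Variables (R : realFieldType) (U : lmodType R) (I : finType) (X : I -> U).

Definition convex_coords (a : U) (c : I -> R) : Prop :=
  [/\ forall i, 0 <= c i, \sum_i c i = 1 & \sum_i c i *: X i = a].

Lemma convex_coords_eq a c c' : c =1 c' -> convex_coords a c -> convex_coords a c'.
Proof.
move=> e [c_ge0 c_sum c_comb]; split=> [i||]; first by rewrite -e.
  by rewrite -c_sum; apply: eq_bigr => i _; rewrite e.
by rewrite -c_comb; apply: eq_bigr => i _; rewrite e.
Qed.

Lemma convex_coords_le1 a c i : convex_coords a c -> c i <= 1.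
Proof.
case=> c_ge0 c_sum _; rewrite -c_sum (bigD1 i) //= lerDl.
by apply: sumr_ge0 => l _; apply: c_ge0.
Qed.

Lemma convex_coords_mean (J : finType) (A : {pred J}) (c : J -> I -> R) a :
  (0 < #|A|)%N -> (forall g, g \in A -> convex_coords a (c g)) ->
  convex_coords a (fun i => #|A|%:R^-1 * \sum_(g in A) c g i).
Proof.
move=> A_gt0 cA; have A_neq0 : #|A|%:R != 0 :> R by rewrite pnatr_eq0 -lt0n.
split.
- move=> i; rewrite mulr_ge0 ?invr_ge0 ?ler0n //.
  by apply: sumr_ge0 => g /cA [].
- rewrite -mulr_sumr exchange_big /=.
  by under eq_bigr => g /cA [_ -> _] do []; rewrite sumr_const mulVf.
- under eq_bigr do rewrite -scalerA scaler_suml.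
  rewrite -scaler_sumr exchange_big /=.
  under eq_bigr => g /cA [_ _ ->] do [].
  by rewrite sumr_const -scaler_nat scalerA mulVf // scale1r.
Qed.

End ConvexCoords.

Lemma bary_out (R : realFieldType) n (V : 'I_n -> 'rV[R]_2) (t : tri n) v x :
  ~~ tri_has t v -> bary V t v x = 0.
Proof.
case: t => [[i j] k]; rewrite /tri_has /bary !negb_or.
by case/and3P=> /negbTE-> /negbTE-> /negbTE->.
Qed.

Section Barycentric.
Variables (R : realFieldType) (n : nat) (V : 'I_n -> 'rV[R]_2) (i j k : 'I_n).
Hypothesis nondeg : area (V i) (V j) (V k) != 0.
Local Notation t := (i, j, k).
Local Notation D := (area (V i) (V j) (V k)).
Implicit Types (v w : 'I_n) (x : 'rV[R]_2).

Lemma tri_distinct : [/\ i != j, j != k & i != k].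
Proof.
by split; apply: contraNneq nondeg => e;
  rewrite ?e ?area_same12 ?area_same23 ?area_same13.
Qed.

Lemma baryE v x : bary V t v x =
  (v == i)%:R * (area (V k) x (V j) / D) + (v == j)%:R * (area (V i) x (V k) / D) +
  (v == k)%:R * (area (V j) x (V i) / D).
Proof.
have [ij jk ik] := tri_distinct; rewrite /bary.
have [->|vi] := eqVneq v i; first by rewrite (negbTE ij) (negbTE ik) /=; ring.
have [->|vj] := eqVneq v j; first by rewrite (negbTE jk) /=; ring.
by case: (v == k) => /=; ring.
Qed.

Lemma bary_vertices x : [/\ bary V t i x = area (V k) x (V j) / D,
  bary V t j x = area (V i) x (V k) / D & bary V t k x = area (V j) x (V i) / D].
Proof.
have [ij jk ik] := tri_distinct; split; rewrite /bary ?eqxx //.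
  by rewrite eq_sym (negbTE ij).
by rewrite eq_sym (negbTE ik) eq_sym (negbTE jk).
Qed.

Lemma sum_indicator (F : 'I_n -> R) w : \sum_v (v == w)%:R * F v = F w.
Proof.
rewrite (bigD1 w) //= eqxx mul1r big1 ?addr0 // => v /negbTE->; exact: mul0r.
Qed.

Lemma bary_sum x : \sum_v bary V t v x = 1.
Proof.
under eq_bigr => v _ do rewrite baryE.
rewrite !big_split /= !(sum_indicator (fun _ => _ / D)).
suff : (area (V k) x (V j) + area (V i) x (V k) + area (V j) x (V i)) / D = 1.
  by rewrite !mulrDl.
by rewrite area_split divff.
Qed.

Lemma sum_indicator_scale (F : 'I_n -> 'rV[R]_2) w : \sum_v (v == w)%:R *: F v = F w.
Proof.
rewrite (bigD1 w) //= eqxx scale1r big1 ?addr0 // => v /negbTE->; exact: scale0r.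
Qed.

Lemma bary_comb x : \sum_v bary V t v x *: V v = x.
Proof.
under eq_bigr => v _ do rewrite baryE !scalerDl -!(scalerA _ (_ / D)).
rewrite !big_split /= !sum_indicator_scale.
apply: (scalerI nondeg); rewrite -[RHS]area_decomp !scalerDr !scalerA.
by rewrite !(mulrC D) !divfK.
Qed.

Lemma bary_vertex v w : tri_has t w -> bary V t v (V w) = (v == w)%:R.
Proof.
rewrite baryE => /or3P[]/eqP->;
  rewrite ?area_same12 ?area_same23 ?area_same13 ?(area_cycle (V k)) -?(area_cycle (V i));
  rewrite divff //; ring.
Qed.

Lemma bary_affine v (J : finType) (w : J -> R) (X : J -> 'rV[R]_2) :
  \sum_l w l = 1 -> bary V t v (\sum_l w l *: X l) = \sum_l w l * bary V t v (X l).
Proof.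
move=> w1; rewrite baryE !area_affine2 // !mulr_suml !mulr_sumr -!big_split.
by apply: eq_bigr => l _; rewrite baryE /=; ring.
Qed.

Lemma bary_ge0 v x : in_tri V t x -> 0 <= bary V t v x.
Proof.
case/and3P=> ge0i ge0j ge0k; have [/or3P[]/eqP-> // | /bary_out->//] := boolP (tri_has t v).
Qed.

Lemma convex_coords_bary x : in_tri V t x -> convex_coords V x (bary V t ^~ x).
Proof. by move=> xt; split; [move=> v; apply: bary_ge0 | apply: bary_sum | apply: bary_comb]. Qed.

Lemma bary_unique (c : 'I_n -> R) x : (forall v, ~~ tri_has t v -> c v = 0) ->
  \sum_v c v = 1 -> \sum_v c v *: V v = x -> forall v, c v = bary V t v x.
Proof.
move=> c_out c1 <- v; rewrite bary_affine // -[LHS](sum_indicator c v).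
apply: eq_bigr => w _; have [/bary_vertex->|/c_out->] := boolP (tri_has t w).
  by rewrite eq_sym mulrC.
by rewrite mulr0 mul0r.
Qed.

Lemma area_bary P Q x : area P Q x = \sum_v bary V t v x * area P Q (V v).
Proof. by rewrite -{1}(bary_comb x) area_affine // bary_sum. Qed.

End Barycentric.

Section Separation.
Variables (R : realFieldType) (n : nat) (V : 'I_n -> 'rV[R]_2).

Definition nondeg_tri (t : tri n) : bool :=
  let: (i, j, k) := t in area (V i) (V j) (V k) != 0.

Lemma bary_eq_of_separating_line (t t' : tri n) P Q x :
  nondeg_tri t -> nondeg_tri t' -> in_tri V t x -> in_tri V t' x ->
  (forall y, tri_has t y -> 0 <= area P Q (V y)) ->
  (forall y, tri_has t' y -> area P Q (V y) <= 0) ->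
  (forall y, tri_has t' y -> area P Q (V y) = 0 -> tri_has t y) ->
  forall v, bary V t' v x = bary V t v x.
Proof.
case: t t' => [[i j] k] [[i' j'] k'] nd nd' xt xt' f_ge0 f_le0 f_eq0.
have fx_ge0 : 0 <= area P Q x.
  rewrite (area_bary nd); apply: sumr_ge0 => w _.
  have [wt|/bary_out->] := boolP (tri_has (i, j, k) w); last by rewrite mul0r.
  by rewrite mulr_ge0 ?bary_ge0 ?f_ge0.
have term_ge0 w : 0 <= - (bary V (i', j', k') w x * area P Q (V w)).
  have [wt|/bary_out->] := boolP (tri_has (i', j', k') w); last by rewrite mul0r oppr0.
  by rewrite oppr_ge0 mulr_ge0_le0 ?bary_ge0 ?f_le0.
have fx_le0 : area P Q x <= 0.
  by rewrite (area_bary nd') -oppr_ge0 -sumrN; apply: sumr_ge0.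
have sum0 : \sum_w - (bary V (i', j', k') w x * area P Q (V w)) = 0.
  by rewrite sumrN -(area_bary nd'); apply/eqP; rewrite oppr_eq0 eq_le fx_le0 fx_ge0.
have support w : ~~ tri_has (i, j, k) w -> bary V (i', j', k') w x = 0.
  move=> wt; have [wt'|/bary_out->//] := boolP (tri_has (i', j', k') w).
  have /(_ w isT)/eqP := psumr_eq0P (fun w _ => term_ge0 w) sum0.
  rewrite oppr_eq0 mulf_eq0 => /orP[/eqP//|/eqP fw0].
  by rewrite (f_eq0 w wt' fw0) in wt.
exact: (bary_unique (c := bary V (i', j', k') ^~ x) nd support
  (bary_sum nd' x) (bary_comb nd' x)).
Qed.

End Separation.

Section TriangleCombinatorics.
Variable n : nat.
Implicit Types (p q y w : 'I_n) (t : tri n).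

Definition ordered t : bool := let: (i, j, k) := t in (i < j < k)%N.

Definition inside p q t : bool := [forall (y : 'I_n | tri_has t y), (p <= y <= q)%N].

Definition outside p q t : bool := [forall (y : 'I_n | tri_has t y), ((y <= p) || (q <= y))%N].

Lemma tri_hasE (i j k y : 'I_n) :
  tri_has (i, j, k) y = [|| y == i :> nat, y == j :> nat | y == k :> nat].
Proof. by []. Qed.

Lemma ordered_tri_eq t t' : ordered t -> ordered t' ->
  (forall y, tri_has t' y -> tri_has t y) -> t' = t.
Proof.
case: t t' => [[i j] k] [[i' j'] k'] /andP[ij jk] /andP[ij' jk'] sub.
have := sub i'; have := sub j'; have := sub k'; rewrite !tri_hasE !eqxx !orbT.
move=> /(_ isT) ? /(_ isT) ? /(_ isT) ?.
by have [-> -> ->] : [/\ i' = i, j' = j & k' = k] by split; apply/ord_inj; lia.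
Qed.

Variable sd : rel 'I_n.
Hypothesis sd_sym : symmetric sd.
Hypothesis sd_nested : forall p q y z, sd p q -> sd y z -> (p < y < q)%N -> (p <= z <= q)%N.

Definition spanned t : bool := let: (i, j, k) := t in [&& sd i j, sd j k & sd i k].

Lemma separating_chord t t' w : ordered t -> spanned t -> spanned t' ->
  tri_has t' w -> ~~ tri_has t w ->
  exists p q, [/\ (p < q)%N, tri_has t p, tri_has t q &
    outside p q t && inside p q t' || inside p q t && outside p q t'].
Proof.
case: t t' => [[i j] k] [[i' j'] k'] /andP[ij jk] /and3P[sij sjk sik] /and3P[sij' sjk' sik'].
move=> wt' wt.
have w_sd y : tri_has (i', j', k') y -> y != w -> sd w y.
  by move: wt'; rewrite /tri_has => /or3P[]/eqP-> /or3P[]/eqP->; rewrite ?eqxx // 1?sd_sym.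
have t'_span p q : sd p q -> (p < w < q)%N -> inside p q (i', j', k').
  move=> spq pwq; apply/forall_inP => y yt'.
  have [->|yw] := eqVneq y w; first by case/andP: pwq => /ltnW-> /ltnW->.
  exact: sd_nested spq (w_sd y yt' yw) pwq.
have t_v y : tri_has (i, j, k) y ->
    [/\ (i <= y <= k)%N, (y <= i) || (j <= y) & (y <= j) || (k <= y)]%N.
  by rewrite tri_hasE => /or3P[]/eqP->; clear -ij jk; split; lia.
have i_v : tri_has (i, j, k) i by rewrite /tri_has eqxx.
have j_v : tri_has (i, j, k) j by rewrite /tri_has eqxx orbT.
have k_v : tri_has (i, j, k) k by rewrite /tri_has eqxx !orbT.
have [iwj|niwj] := boolP (i < w < j)%N.
  exists i, j; split=> //; apply/orP; left; apply/andP; split; last exact: t'_span.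
  by apply/forall_inP => y /t_v[].
have [jwk|njwk] := boolP (j < w < k)%N.
  exists j, k; split=> //; apply/orP; left; apply/andP; split; last exact: t'_span.
  by apply/forall_inP => y /t_v[].
have w_out : ((w < i) || (k < w))%N by move: wt niwj njwk; rewrite tri_hasE; clear -ij jk; lia.
exists i, k; split=> //; first exact: ltn_trans jk.
apply/orP; right; apply/andP; split; apply/forall_inP => y; first by case/t_v.
move=> yt'; have [iyk|] := boolP (i < y < k)%N; last by rewrite negb_and -!leqNgt.
have yw : y != w by apply: contraTneq iyk => ->; clear -w_out; lia.
have syw : sd y w by rewrite sd_sym w_sd.
by have := sd_nested sik syw iyk; clear -w_out; lia.
Qed.

End TriangleCombinatorics.

Section ConvexPolygon.
Variables (R : realFieldType) (n : nat) (V : 'I_n -> 'rV[R]_2).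
Hypothesis ccw : ccw_strictly_convex V.
Implicit Types (p q w : 'I_n) (t : tri n) (x : 'rV[R]_2).

Lemma area_chord_lt0 p q w : (p < w < q)%N -> area (V p) (V q) (V w) < 0.
Proof. by move=> /ccw; rewrite -(area_cycle (V w)) area_swap oppr_gt0. Qed.

Lemma area_chord_gt0 p q w : (p < q)%N -> ((w < p) || (q < w))%N ->
  0 < area (V p) (V q) (V w).
Proof.
move=> pq /orP[wp|qw]; last exact: ccw (introT andP (conj pq qw)).
by rewrite -area_cycle; apply: ccw; rewrite wp.
Qed.

Lemma area_chord_le0 p q w : (p < q)%N -> (p <= w <= q)%N -> area (V p) (V q) (V w) <= 0.
Proof.
move=> pq pwq; have [->|wp] := eqVneq w p; first by rewrite area_same13.
have [->|wq] := eqVneq w q; first by rewrite area_same23.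
by apply/ltW/area_chord_lt0; move: wp wq; rewrite !ord_eqE; lia.
Qed.

Lemma area_chord_ge0 p q w : (p < q)%N -> ((w <= p) || (q <= w))%N ->
  0 <= area (V p) (V q) (V w).
Proof.
move=> pq pwq; have [->|wp] := eqVneq w p; first by rewrite area_same13.
have [->|wq] := eqVneq w q; first by rewrite area_same23.
by apply/ltW/area_chord_gt0; move: wp wq; rewrite !ord_eqE; lia.
Qed.

Lemma area_chord_eq0 p q w : (p < q)%N -> area (V p) (V q) (V w) = 0 -> (w == p) || (w == q).
Proof.
move=> pq w0; apply/negPn/negP; rewrite negb_or => /andP[wp wq].
have [pwq|] := boolP (p < w < q)%N; first by have := area_chord_lt0 pwq; rewrite w0 ltxx.
move=> npwq; have := @area_chord_gt0 p q w pq; rewrite w0 ltxx; apply/implyP/negPn.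
by move: wp wq npwq; rewrite !ord_eqE; lia.
Qed.

Lemma ordered_nondeg_tri t : ordered t -> nondeg_tri V t.
Proof. by case: t => [[i j] k] /ccw; rewrite lt0r => /andP[]. Qed.

Lemma bary_eq_of_chord t t' p q x : ordered t -> ordered t' ->
  in_tri V t x -> in_tri V t' x -> (p < q)%N -> tri_has t p -> tri_has t q ->
  outside p q t && inside p q t' || inside p q t && outside p q t' ->
  forall v, bary V t' v x = bary V t v x.
Proof.
move=> /ordered_nondeg_tri nd /ordered_nondeg_tri nd' xt xt' pq tp tq.
case/orP=> /andP[/forall_inP sep /forall_inP sep'].
- apply: (bary_eq_of_separating_line (P := V p) (Q := V q)) => // y.
  + by move/sep; apply: area_chord_ge0.
  + by move/sep'; apply: area_chord_le0.
  + by move=> _ /(area_chord_eq0 pq)/orP[]/eqP->.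
- apply: (bary_eq_of_separating_line (P := V q) (Q := V p)) => // y.
  + by move/sep => ?; rewrite area_swap oppr_ge0 area_chord_le0.
  + by move/sep' => ?; rewrite area_swap oppr_le0 area_chord_ge0.
  + move=> _ /eqP; rewrite area_swap oppr_eq0 => /eqP/(area_chord_eq0 pq).
    by case/orP=> /eqP->.
Qed.

Variable sd : rel 'I_n.
Hypothesis sd_sym : symmetric sd.
Hypothesis sd_nested : forall p q y z, sd p q -> sd y z -> (p < y < q)%N -> (p <= z <= q)%N.

Lemma bary_consistent t t' x : ordered t -> ordered t' -> spanned sd t -> spanned sd t' ->
  in_tri V t x -> in_tri V t' x -> forall v, bary V t' v x = bary V t v x.
Proof.
move=> ot ot' st st' xt xt'.
have [/forall_inP sub|] := boolP [forall (y | tri_has t' y), tri_has t y].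
  by rewrite (ordered_tri_eq ot ot' sub).
rewrite negb_forall_in => /exists_inP[w wt' wt].
have [p [q [pq tp tq sep]]] := separating_chord sd_sym sd_nested ot st st' wt' wt.
exact: bary_eq_of_chord ot ot' xt xt' pq tp tq sep.
Qed.

End ConvexPolygon.

Section Chords.
Local Close Scope ring_scope.
Variable n' : nat.
Local Notation n := n'.+3.
Implicit Types (i j k l p q x y z : 'I_n) (c d : {set 'I_n}).

Lemma adj_lt i j : i < j ->
  adj i j = (j == i.+1 :> nat) || (i == 0 :> nat) && (j == n.-1 :> nat).
Proof.
move=> ij; have jn := ltn_ord j; rewrite /adj (modn_small (_ : i.+1 < n)); last lia.
case: (ltnP j.+1 n) => j1n; first by rewrite modn_small //; apply/idP/idP; lia.
have -> : j.+1 = n by lia.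
by rewrite modnn; apply/idP/idP; lia.
Qed.

Lemma adj_sym : symmetric (@adj n).
Proof. by move=> i j; rewrite /adj orbC. Qed.

Lemma set2_ordered_inj x y i j : x < y -> i < j -> [set x; y] = [set i; j] -> x = i /\ y = j.
Proof.
move=> xy ij e.
have /[!inE] xij : x \in [set i; j] by rewrite -e set21.
have /[!inE] yij : y \in [set i; j] by rewrite -e set22.
have /[!inE] ixy : i \in [set x; y] by rewrite e set21.
have /[!inE] jxy : j \in [set x; y] by rewrite e set22.
by move: xij yij ixy jxy; rewrite !ord_eqE => *; split; apply/ord_inj; lia.
Qed.

Lemma chordP c : is_chord c -> exists x y, [/\ x < y, c = [set x; y] & ~~ adj x y].
Proof.
case/existsP=> i /existsP[j /andP[/andP[/eqP-> ij] nadj]].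
move: ij; rewrite ord_eqE; case: (ltngtP i j) => // [lt_ij|lt_ji] _; first by exists i, j.
by exists j, i; rewrite setUC adj_sym.
Qed.

Lemma crossingE i j k l : i < j -> k < l ->
  crossing [set i; j] [set k; l] = [&& i < k, k < j & j < l].
Proof.
move=> ij kl; apply/existsP/idP => [[i1 /existsP[j1 /existsP[k1 /existsP[l1]]]]|].
  case/and3P=> /eqP e1 /eqP e2 /andP[/andP[ik kj] jl].
  have [ei ej] := set2_ordered_inj ij (ltn_trans ik kj) e1.
  have [ek el] := set2_ordered_inj kl (ltn_trans kj jl) e2.
  by subst; rewrite ik kj jl.
case/and3P=> ik kj jl; exists i; apply/existsP; exists j; apply/existsP; exists k.
by apply/existsP; exists l; rewrite !eqxx ik kj jl.
Qed.

Definition linked c d : bool := crossing c d || crossing d c.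

Lemma crossing_chord_irrefl c : is_chord c -> ~~ crossing c c.
Proof. by case/chordP=> x [y [xy -> _]]; rewrite crossingE //; lia. Qed.

(* [\min] has no neutral element on [nat], hence the detour through [\max]. *)
Definition lo c : nat := n.-1 - \max_(x in c) (n.-1 - x).
Definition hi c : nat := \max_(x in c) x.

Lemma lo_hi_set2 x y : x < y -> lo [set x; y] = x /\ hi [set x; y] = y.
Proof.
move=> xy; have yn := ltn_ord y.
rewrite /lo /hi !big_setU1 ?inE ?ord_eqE /= ?big_set1 //; lia.
Qed.

(* Each interval of a laminar family owns an interior point lying in none of the
   intervals nested in it; these points are distinct and avoid the ends 0 and n - 1. *)
Section Laminar.
Variable F : {set {set 'I_n}}.
Hypothesis F_wide : forall c, c \in F -> exists x y, x.+1 < y /\ c = [set x; y].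
Hypothesis F_laminar :
  forall c d, c \in F -> d \in F -> ~~ [&& lo c < lo d, lo d < hi c & hi c < hi d].

Lemma F_lo_hi c : c \in F -> (lo c).+1 < hi c < n.
Proof.
by move=> /F_wide[x [y [xy ->]]]; have [-> ->] := lo_hi_set2 (ltnW xy); rewrite xy ltn_ord.
Qed.

Lemma F_lo_hi_inj c d : c \in F -> d \in F -> lo c = lo d -> hi c = hi d -> c = d.
Proof.
move=> /F_wide[x [y [xy ->]]] /F_wide[x' [y' [xy' ->]]].
have [-> ->] := lo_hi_set2 (ltnW xy); have [-> ->] := lo_hi_set2 (ltnW xy').
by move=> /ord_inj-> /ord_inj->.
Qed.

Definition nested d c : bool := [&& d != c, lo c <= lo d & hi d <= hi c].

Definition private_point c (z : 'I_n) : bool :=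
  (lo c < z < hi c) && [forall (d | d \in F), nested d c ==> ~~ (lo d < z < hi d)].

Lemma private_point_exists c : c \in F -> exists z, private_point c z.
Proof.
move=> cF; have /andP[c_wide c_n] := F_lo_hi cF.
have [N0 | [d0 d0N]] := set_0Vmem [set d in F | nested d c].
  have z_n : (lo c).+1 < n by lia.
  exists (Ordinal z_n); apply/andP; split=> /=; first lia.
  apply/forall_inP => d dF; apply/implyP => dc.
  have : d \in [set d in F | nested d c] by rewrite inE dF dc.
  by rewrite N0 inE.
have [d dN d_widest] :=
  @arg_maxnP _ d0 (fun d => d \in [set d in F | nested d c]) (fun d => hi d - lo d) d0N.
move: (dN); rewrite inE => /andP[dF /and3P[dc cd_lo dc_hi]].
have /andP[d_wide _] := F_lo_hi dF.
have widest e : e \in F -> nested e c -> hi e - lo e <= hi d - lo d.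
  by move=> eF ec; apply: d_widest; rewrite inE eF.
case: (ltnP (lo c) (lo d)) => [c_lo_d | d_lo_c].
  have z_n : lo d < n by lia.
  exists (Ordinal z_n); apply/andP; split=> /=; first lia.
  apply/forall_inP => e eF; apply/implyP => ec; apply/negP => ede.
  by have := widest e eF ec; have := F_laminar eF dF; lia.
have d_hi_c : hi d < hi c.
  rewrite ltn_neqAle dc_hi andbT; apply: contra dc => /eqP hi_dc.
  by rewrite (F_lo_hi_inj dF cF _ hi_dc) //; lia.
have z_n : hi d < n by lia.
exists (Ordinal z_n); apply/andP; split=> /=; first lia.
apply/forall_inP => e eF; apply/implyP => ec; apply/negP => ede.
have := widest e eF ec; have := F_laminar dF eF.
by move: ec => /and3P[]; lia.
Qed.

Lemma private_point_inj c d z : c \in F -> d \in F ->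
  private_point c z -> private_point d z -> c = d.
Proof.
move=> cF dF /andP[cz /forall_inP c_priv] /andP[dz /forall_inP d_priv].
apply/eqP/negP => /negP cd; have := F_laminar cF dF; have := F_laminar dF cF.
move=> dc_nc cd_nc; have /orP[dc|cd'] : nested d c || nested c d.
  by rewrite /nested eq_sym cd /=; lia.
- by move: (c_priv d dF); rewrite dc dz.
- by move: (d_priv c cF); rewrite cd' cz.
Qed.

Lemma laminar_card : #|F| <= n - 2.
Proof.
pose z c := odflt ord0 [pick z | private_point c z].
have z_priv c : c \in F -> private_point c (z c).
  move=> cF; rewrite /z; case: pickP => [//|none].
  by have [z0] := private_point_exists cF; rewrite none.
have z_inj : {in F &, injective z}.
  move=> c d cF dF e; apply: (private_point_inj cF dF (z_priv c cF)).
  by rewrite e; apply: z_priv.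
rewrite -(card_in_imset z_inj).
have -> : n - 2 = #|~: [set (ord0 : 'I_n); ord_max]|.
  by have := cardsC [set (ord0 : 'I_n); ord_max]; rewrite cards2 card_ord ord_eqE /=; lia.
apply/subset_leq_card/subsetP => _ /imsetP[c cF ->]; rewrite !inE !ord_eqE /=.
by have /andP[+ _] := z_priv c cF; have := F_lo_hi cF; lia.
Qed.

End Laminar.

Definition outer_edge : {set 'I_n} := [set ord0; ord_max].

Lemma outer_edge_ends x y : x < y -> [set x; y] = outer_edge -> x = ord0 /\ y = ord_max.
Proof. by move=> xy; apply: set2_ordered_inj. Qed.

Lemma outer_edge_not_chord : ~~ is_chord outer_edge.
Proof.
apply/negP=> /chordP[x [y [xy /esym e]]].
by have [-> ->] := outer_edge_ends xy e; rewrite adj_lt //= eqxx.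
Qed.

Lemma noncrossing_chords_card (S : {set {set 'I_n}}) : (forall c, c \in S -> is_chord c) ->
  (forall c d, c \in S -> d \in S -> ~~ crossing c d) -> #|S| <= n - 3.
Proof.
move=> S_chords S_noncrossing.
have outS : outer_edge \notin S by apply: contraNN outer_edge_not_chord => /S_chords.
have F_wide c : c \in outer_edge |: S -> exists x y, x.+1 < y /\ c = [set x; y].
  case/setU1P=> [->|/S_chords/chordP[x [y [xy -> nadj]]]]; first by exists ord0, ord_max.
  by exists x, y; split=> //; move: nadj; rewrite adj_lt //; lia.
have F_laminar c d : c \in outer_edge |: S -> d \in outer_edge |: S ->
    ~~ [&& lo c < lo d, lo d < hi c & hi c < hi d].
  move=> cF dF; have [x [y [/ltnW xy ec]]] := F_wide c cF.
  have [x' [y' [/ltnW xy' ed]]] := F_wide d dF; have yn := ltn_ord y'.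
  rewrite ec ed; have [-> ->] := lo_hi_set2 xy; have [-> ->] := lo_hi_set2 xy'.
  case/setU1P: cF => [|cS]; first by rewrite ec => /(outer_edge_ends xy)[-> ->] /=; lia.
  case/setU1P: dF => [|dS]; first by rewrite ed => /(outer_edge_ends xy')[-> ->] /=; lia.
  by have := S_noncrossing c d cS dS; rewrite ec ed crossingE.
by have := laminar_card F_wide F_laminar; rewrite cardsU1 outS; lia.
Qed.

Section Decomposition.
Variable delta : {set {set 'I_n}}.
Hypothesis delta_chords : forall c, c \in delta -> is_chord c.
Hypothesis delta_noncrossing : forall c d, c \in delta -> d \in delta -> ~~ crossing c d.

Lemma side_sym : symmetric (side delta).
Proof. by move=> x y; rewrite /side adj_sym setUC. Qed.

Lemma side_nested p q y z : side delta p q -> side delta y z -> p < y < q -> p <= z <= q.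
Proof.
move=> spq syz pyq; have zn := ltn_ord z; have qn := ltn_ord q.
case/orP: spq => [|pq_delta]; first by rewrite adj_lt; lia.
case/orP: syz => [|yz_delta].
  case: (ltngtP y z) => [yz|zy|yz]; last lia.
    by rewrite adj_lt //; lia.
  by rewrite adj_sym adj_lt //; lia.
case: (ltngtP y z) => [yz|zy|]; last lia.
  by have := delta_noncrossing pq_delta yz_delta; rewrite crossingE //; lia.
rewrite setUC in yz_delta.
by have := delta_noncrossing yz_delta pq_delta; rewrite crossingE //; lia.
Qed.

Hypothesis delta_card : #|delta| = n - 3.

Lemma noncrossing_chord_mem c : is_chord c ->
  (forall d, d \in delta -> ~~ linked c d) -> c \in delta.
Proof.
move=> c_chord c_nc; apply/negPn/negP => c_out.
have chords d : d \in c |: delta -> is_chord d by case/setU1P=> [->|/delta_chords].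
have noncrossing d e : d \in c |: delta -> e \in c |: delta -> ~~ crossing d e.
  move=> /setU1P[->|dD] /setU1P[->|eD]; first exact: crossing_chord_irrefl.
  - by move: (c_nc e eD); rewrite negb_or => /andP[].
  - by move: (c_nc d dD); rewrite negb_or => /andP[].
  - exact: delta_noncrossing.
by have := noncrossing_chords_card chords noncrossing; rewrite cardsU1 c_out delta_card; lia.
Qed.

Lemma side_apex p q : p.+1 < q -> side delta p q ->
  exists r : 'I_n, [/\ p < r < q, side delta p r & side delta r q].
Proof.
move=> pq spq; have p1_n : p.+1 < n by have := ltn_ord q; lia.
have p1 : (p < Ordinal p1_n < q) && side delta p (Ordinal p1_n).
  by rewrite /side adj_lt /= ?eqxx //; lia.
have [r /andP[prq spr] r_max] :=
  @arg_maxnP 'I_n _ (fun x => (p < x < q) && side delta p x) (fun x : 'I_n => x : nat) p1.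
exists r; split=> //; have [rq|nrq] := eqVneq (q : nat) r.+1.
  by rewrite /side adj_lt ?rq ?eqxx //; lia.
apply/orP; right; apply: noncrossing_chord_mem.
  apply/existsP; exists r; apply/existsP; exists q; rewrite eqxx adj_lt; last lia.
  by rewrite ord_eqE; lia.
move=> d dD; have [x [y [xy ed _]]] := chordP (delta_chords dD).
have sxy : side delta x y by rewrite /side -ed dD orbT.
have rq : r < q by case/andP: prq.
rewrite ed /linked !crossingE //.
apply/norP; split; apply/negP => /and3P[? ? ?].
  by have := side_nested spq sxy; lia.
case: (ltngtP x p) => [xp|px|xp].
- by have := side_nested sxy spq; lia.
- by have := side_nested spr sxy; lia.
- have sxy' : side delta p y by rewrite (_ : p = x) //; apply/ord_inj.
  have pyq : p < y < q by lia.
  by have := r_max y; rewrite pyq sxy' => /(_ isT); lia.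
Qed.

End Decomposition.

End Chords.

Lemma triangles_mem n (delta : {set {set 'I_n}}) t : (t \in triangles delta) = is_triangle delta t.
Proof. by rewrite mem_filter mem_enum andbT. Qed.

Section Covering.
Variables (R : realFieldType) (n' : nat).
Local Notation n := n'.+3.
Variable V : 'I_n -> 'rV[R]_2.
Hypothesis ccw : ccw_strictly_convex V.
Variable delta : {set {set 'I_n}}.
Hypothesis delta_decomp : chordal_decomposition delta.
Variable a : 'rV[R]_2.
Implicit Types p q r : 'I_n.

Lemma in_polygon_edges : in_polygon V a ->
  (forall p q, q = p.+1 :> nat -> 0 <= area (V p) (V q) a) /\ 0 <= area (V ord_max) (V ord0) a.
Proof.
case=> w [w_ge0 [w1 ->]]; split=> [p q qp|]; rewrite area_affine //;
  apply: sumr_ge0 => i _; apply: mulr_ge0 => //.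
  by apply: (area_chord_ge0 ccw); lia.
by rewrite area_swap oppr_ge0; apply: (area_chord_le0 ccw) => //=; have := ltn_ord i; lia.
Qed.

Lemma in_tri_of_areas p r q : (p < r < q)%N -> 0 <= area (V p) (V r) a ->
  0 <= area (V r) (V q) a -> 0 <= area (V q) (V p) a -> in_tri V (p, r, q) a.
Proof.
move=> prq pr rq qp; have D_gt0 := ccw prq; apply/and3P.
have [-> -> ->] := bary_vertices (ordered_nondeg_tri (t := (p, r, q)) ccw prq) a.
by split; apply: divr_ge0; rewrite ?(ltW D_gt0) // -area_cycle.
Qed.

Hypothesis a_in : in_polygon V a.

Lemma covering_triangle_under p q : (p.+1 < q)%N -> side delta p q ->
  0 <= area (V q) (V p) a -> exists2 t, t \in triangles delta & in_tri V t a.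
Proof.
have [edges _] := in_polygon_edges a_in; case: delta_decomp => chords card noncross.
have skip (x y : 'I_n) : (x < y)%N -> area (V x) (V y) a < 0 -> (x.+1 < y)%N.
  move=> xy; apply: contraTT; rewrite -leNgt -leqNgt => yx.
  by apply: edges; apply/eqP; rewrite eqn_leq yx.
(* If a lies beyond a side of the apex triangle, that side is a chord: recurse on it. *)
have [m le_qp] : exists m, (q - p <= m)%N by exists (q - p)%N.
elim: m p q le_qp => [|m IH] p q le_qp pq spq qp; first lia.
have [r [/andP[pr rq] spr srq]] := side_apex chords noncross card pq spq.
have [pr_lt0|pr_ge0] := ltrP (area (V p) (V r) a) 0.
  by apply: (IH p r) => //; [lia | exact: skip | rewrite area_swap oppr_ge0 ltW].
have [rq_lt0|rq_ge0] := ltrP (area (V r) (V q) a) 0.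
  by apply: (IH r q) => //; [lia | exact: skip | rewrite area_swap oppr_ge0 ltW].
exists (p, r, q); last by apply: in_tri_of_areas; rewrite ?pr.
by rewrite triangles_mem /is_triangle pr rq spr srq spq.
Qed.

Lemma covering_triangle : exists2 t, t \in triangles delta & in_tri V t a.
Proof.
have [_ outer] := in_polygon_edges a_in.
by apply: (@covering_triangle_under ord0 ord_max) => //; rewrite /side adj_lt //= eqxx.
Qed.

End Covering.

Lemma Fsum_const (R : realFieldType) n (V : 'I_n -> 'rV[R]_2) (prev s : seq (tri n)) v a b :
  (forall t, t \in s -> in_tri V t a -> bary V t v a = b) ->
  Fsum V prev s v a = if has (in_tri V ^~ a) prev then 0
                      else if has (in_tri V ^~ a) s then b else 0.
Proof.
elim: s prev => [|t s IH] prev s_b /=; first by case: has.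
rewrite IH => [|t' t's]; last by apply: s_b; rewrite inE t's orbT.
rewrite has_rcons; case: has; case ta: (in_tri V t a) => /=; rewrite ?subrr ?add0r //.
by rewrite subr0 addr0 s_b ?mem_head.
Qed.

Section ChordalCoordinates.
Variables (R : realFieldType) (n' : nat).
Local Notation n := n'.+3.
Variable V : 'I_n -> 'rV[R]_2.
Hypothesis ccw : ccw_strictly_convex V.
Variable delta : {set {set 'I_n}}.
Hypothesis delta_decomp : chordal_decomposition delta.

Lemma triangle_ordered_spanned t : t \in triangles delta -> ordered t && spanned (side delta) t.
Proof. by case: t => [[i j] k]; rewrite triangles_mem. Qed.

Lemma chordal_coordE t a v : t \in triangles delta -> in_tri V t a ->
  chordal_coord V delta a v = bary V t v a.
Proof.
case: delta_decomp => chords _ noncross tT ta.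
have /andP[ot st] := triangle_ordered_spanned tT.
rewrite /chordal_coord (@Fsum_const _ _ _ _ _ _ _ (bary V t v a)) /=.
  case: ifP => // /hasPn t_out; rewrite bary_out //.
  by apply: contraTN ta => tv; apply: t_out; rewrite mem_filter tv tT.
move=> t'; rewrite mem_filter => /andP[_ /triangle_ordered_spanned/andP[ot' st']] t'a.
exact: (bary_consistent ccw (side_sym delta) (side_nested noncross)).
Qed.

Lemma convex_coords_chordal a : in_polygon V a -> convex_coords V a (chordal_coord V delta a).
Proof.
move=> a_in; have [t tT ta] := covering_triangle ccw delta_decomp a_in.
have /andP[ot _] := triangle_ordered_spanned tT.
apply: (convex_coords_eq (fun v => esym (chordal_coordE v tT ta))).
case: t ot ta {tT} => [[i j] k] /(ordered_nondeg_tri ccw) nd ta.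
exact: (convex_coords_bary nd ta).
Qed.

End ChordalCoordinates.

Section Dihedral.
Variable n' : nat.
Local Notation n := n'.+3.
Implicit Types (i j k l s x y : 'I_n) (g : {perm 'I_n}).

Lemma adjE i j : adj i j = (j == i + 1) || (i == j + 1).
Proof.
by rewrite /adj !ord_eqE /= !addn1 (eq_sym (nat_of_ord j)) (eq_sym (nat_of_ord i)).
Qed.

Lemma adj_subE i j : adj i j = (j - i == 1) || (i - j == 1).
Proof. by rewrite adjE !subr_eq addrC (addrC 1 j). Qed.

Lemma dihedral_adj g i j : g \in dihedral n -> adj (g i) (g j) = adj i j.
Proof. by rewrite inE => /forallP/(_ i)/forallP/(_ j)/eqP. Qed.

Lemma dihedral_affine g : g \in dihedral n ->
  (forall i, g i = g 0 + i) \/ (forall i, g i = g 0 - i).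
Proof.
move=> gD; pose e := g 1 - g 0.
have e_unit : e = 1 \/ e = -1.
  rewrite /e; have := dihedral_adj 0 1 gD; rewrite !adjE add0r eqxx => /orP[]/eqP->.
    by left; rewrite addrAC subrr add0r.
  by right; rewrite opprD addrA subrr add0r.
suff g_nat (k : nat) : g k%:R = g 0 + e *+ k /\ g k.+1%:R = g 0 + e *+ k.+1.
  case: e_unit => e_val; [left|right] => i; rewrite -[i in LHS]natr_Zp (g_nat i).1 e_val.
    by rewrite natr_Zp.
  by rewrite mulNrn natr_Zp.
elim: k => [|k [gk gk1]]; first by rewrite mulr0n addr0 mulr1n /e addrC subrK.
split=> //.
have : (g k.+2%:R == g k.+1%:R + 1) || (g k.+1%:R == g k.+2%:R + 1).
  by rewrite -adjE dihedral_adj // adjE [k.+2%:R]mulrS addrC eqxx.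
(* Two steps along the cycle cannot come back, since [n >= 3]. *)
have k2_neq_k : (k.+2%:R : 'I_n) != k%:R.
  by rewrite !mulrS addrA -[X in _ != X]add0r (inj_eq (addIr _)) ord_eqE.
have back : g k.+2%:R = g k%:R -> False by move/perm_inj/eqP; rewrite (negbTE k2_neq_k).
case/orP=> /eqP gk2; case: e_unit gk gk1 => -> gk gk1.
- by rewrite gk2 gk1 !mulrS; ring.
- by exfalso; apply: back; rewrite gk2 gk1 gk !mulrS; ring.
- by exfalso; apply: back; rewrite -(addrK 1 (g _)) -gk2 gk1 gk !mulrS; ring.
- by rewrite -(addrK 1 (g _)) -gk2 gk1 !mulrS; ring.
Qed.

Lemma rotation_inj s : injective (fun i : 'I_n => s + i).
Proof. exact: addrI. Qed.

Lemma reflection_inj s : injective (fun i : 'I_n => s - i).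
Proof. by move=> x y /addrI/oppr_inj. Qed.

Definition dihedral_elt (p : 'I_n * bool) : {perm 'I_n} :=
  if p.2 then perm (@reflection_inj p.1) else perm (@rotation_inj p.1).

Lemma dihedral_elt_mem p : dihedral_elt p \in dihedral n.
Proof.
rewrite inE; apply/forallP => i; apply/forallP => j; case: p => s [];
  rewrite /dihedral_elt /= !permE !adj_subE.
  by rewrite (_ : s - j - (s - i) = i - j) 1?(_ : s - i - (s - j) = j - i) 1?orbC //; ring.
by rewrite (_ : s + j - (s + i) = j - i) 1?(_ : s + i - (s + j) = i - j) //; ring.
Qed.

Lemma dihedral_elt_inj : injective dihedral_elt.
Proof.
have two_neq0 : (1 + 1 : 'I_n) != 0 by rewrite ord_eqE.
move=> [s b] [s' b'] e; have e0 := congr1 (fun g : {perm 'I_n} => g 0) e.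
have e1 := congr1 (fun g : {perm 'I_n} => g 1) e; move: e0 e1 {e}.
case: b b' => [] [] /=; rewrite !permE /= ?subr0 ?addr0 => e0; rewrite ?e0 // => e1;
  exfalso; move/eqP: two_neq0; apply; apply: (@addrI _ (s' - 1)); rewrite addr0.
- by rewrite [RHS]e1; ring.
- by rewrite -[RHS]e1; ring.
Qed.

Lemma dihedral_eq : dihedral n = dihedral_elt @: setT.
Proof.
apply/setP => g; apply/idP/imsetP => [gD|[p _ ->]]; last exact: dihedral_elt_mem.
by case: (dihedral_affine gD) => g_aff; [exists (g 0, false) | exists (g 0, true)] => //;
  apply/permP => i; rewrite permE g_aff.
Qed.

Lemma card_dihedral : #|dihedral n| = (2 * n)%N.
Proof.
rewrite dihedral_eq card_imset; last exact: dihedral_elt_inj.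
by rewrite cardsT card_prod card_ord card_bool mulnC.
Qed.

Definition cyclic (a b c : nat) : bool := [|| a < b < c, b < c < a | c < a < b]%N.

Lemma cyclic_rev (a b c : nat) : a != b -> b != c -> a != c -> cyclic c b a = ~~ cyclic a b c.
Proof. by rewrite /cyclic => ab bc ac; apply/idP/idP; lia. Qed.

Lemma linked_cyclicE i j k l : i != j -> k != l ->
  linked [set i; j] [set k; l] =
  [&& k != i, k != j, l != i, l != j & cyclic i k j != cyclic i l j].
Proof.
rewrite /linked /cyclic !ord_eqE => ij kl.
case: (ltngtP i j) => [ij'|ji|e]; last by rewrite e eqxx in ij.
- case: (ltngtP k l) => [kl'|lk|e]; last by rewrite e eqxx in kl.
  + by rewrite !crossingE //; apply/idP/idP; lia.
  + by rewrite [[set k; l]]setUC !crossingE //; apply/idP/idP; lia.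
- rewrite [[set i; j]]setUC; case: (ltngtP k l) => [kl'|lk|e]; last by rewrite e eqxx in kl.
  + by rewrite !crossingE //; apply/idP/idP; lia.
  + by rewrite [[set k; l]]setUC !crossingE //; apply/idP/idP; lia.
Qed.

Lemma val_add s x : nat_of_ord (s + x) = if (s + x < n)%N then (s + x)%N else (s + x - n)%N.
Proof.
rewrite [LHS]/=; case: ltnP => sx; first by rewrite modn_small.
have := ltn_ord s; have := ltn_ord x => *.
by rewrite -{1}(subnK sx) modnDr modn_small //; lia.
Qed.

Lemma val_opp x : nat_of_ord (- x) = if (x == 0 :> nat) then 0%N else (n - x)%N.
Proof.
rewrite [LHS]/=; case: eqP => x0; first by rewrite x0 modnn.
by rewrite modn_small //; have := ltn_ord x; lia.
Qed.

Lemma cyclic_rotation s (a b c : 'I_n) : a != b -> b != c -> a != c ->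
  cyclic (s + a)%R (s + b)%R (s + c)%R = cyclic a b c.
Proof.
rewrite /cyclic !ord_eqE !val_add => ab bc ac.
have := ltn_ord a; have := ltn_ord b; have := ltn_ord c; have := ltn_ord s.
by case: ifP => ?; case: ifP => ?; case: ifP => ? ? ? ? ?; apply/idP/idP; lia.
Qed.

Lemma cyclic_opp (a b c : 'I_n) : a != b -> b != c -> a != c ->
  cyclic (- a)%R (- b)%R (- c)%R = cyclic c b a.
Proof.
rewrite /cyclic !ord_eqE !val_opp => ab bc ac.
have := ltn_ord a; have := ltn_ord b; have := ltn_ord c.
by case: ifP => ?; case: ifP => ?; case: ifP => ? ? ? ?; apply/idP/idP; lia.
Qed.

Lemma dihedral_cyclic g : g \in dihedral n ->
  (forall a b c, a != b -> b != c -> a != c -> cyclic (g a) (g b) (g c) = cyclic a b c) \/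
  (forall a b c, a != b -> b != c -> a != c -> cyclic (g a) (g b) (g c) = cyclic c b a).
Proof.
case/dihedral_affine => g_aff; [left|right] => a b c ab bc ac;
  rewrite (g_aff a) (g_aff b) (g_aff c).
  exact: cyclic_rotation.
by rewrite cyclic_rotation ?cyclic_opp // (inj_eq oppr_inj).
Qed.

Lemma dihedral_linked g i j k l : g \in dihedral n -> i != j -> k != l ->
  linked [set g i; g j] [set g k; g l] = linked [set i; j] [set k; l].
Proof.
move=> gD ij kl; rewrite !linked_cyclicE ?(inj_eq perm_inj) //.
have [/and4P[ki kj li lj]|] := boolP [&& k != i, k != j, l != i & l != j]; last first.
  by case: (k != i); case: (k != j); case: (l != i); case: (l != j).
rewrite ki kj li lj /=; have ik : i != k by rewrite eq_sym.
have il : i != l by rewrite eq_sym.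
case: (dihedral_cyclic gD) => g_cyc; rewrite !g_cyc //.
by rewrite (@cyclic_rev i k j) // (@cyclic_rev i l j) //; case: cyclic; case: cyclic.
Qed.

Lemma imset_set2 g i j : g @: [set i; j] = [set g i; g j].
Proof. by rewrite imsetU1 imset_set1. Qed.

Lemma act_decomp_chordal delta g : g \in dihedral n ->
  chordal_decomposition delta -> chordal_decomposition (act_decomp delta g).
Proof.
move=> gD [chords card noncross]; split.
- move=> _ /imsetP[c cD ->]; have [x [y [xy -> nadj]]] := chordP (chords c cD).
  rewrite imset_set2; apply/existsP; exists (g x); apply/existsP; exists (g y).
  by rewrite eqxx (inj_eq perm_inj) dihedral_adj // nadj ord_eqE neq_ltn xy.
- by rewrite card_imset //; apply: imset_inj; apply: perm_inj.
- move=> _ _ /imsetP[c cD ->] /imsetP[d dD ->].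
  have [x [y [xy ec _]]] := chordP (chords c cD).
  have [z [w [zw ed _]]] := chordP (chords d dD).
  have := dihedral_linked gD (negbT (ltn_eqF xy)) (negbT (ltn_eqF zw)).
  have := noncross c d cD dD; have := noncross d c dD cD.
  rewrite /linked ec ed !imset_set2 => /negbTE-> /negbTE->.
  by case: crossing.
Qed.

End Dihedral.

Theorem theorem7p17 (R : realFieldType) (n : nat) (V : 'I_n -> 'rV[R]_2)
    (delta : {set {set 'I_n}}) :
  (3 <= n)%N ->
  ccw_strictly_convex V ->
  chordal_decomposition delta ->
  forall a : 'rV[R]_2, in_polygon V a ->
    (forall v : 'I_n, 0 <= kappa V delta a v <= 1) /\
    \sum_(v < n) kappa V delta a v = 1 /\
    a = \sum_(v < n) kappa V delta a v *: V v.
Proof.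
case: n V delta => [|[|[|n']]] // V delta _ ccw decomp a a_in.
have kappa_convex : convex_coords V a (kappa V delta a).
  rewrite /kappa -card_dihedral; apply: convex_coords_mean; first by rewrite card_dihedral.
  move=> g gD; exact: (convex_coords_chordal ccw (act_decomp_chordal gD decomp) a_in).
have [kappa_ge0 kappa_sum kappa_comb] := kappa_convex.
split=> [v|]; first by rewrite kappa_ge0 (convex_coords_le1 _ kappa_convex).
by split=> //; rewrite kappa_comb.
Qed.
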